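(* For every integer $r\ge1$ and every $x\in D$ (for $r=1$, every $x\in\mathbb C$ with $\mathcal S_1(x)\neq0$), $$\mathcal C_r(x)^{2^{r-1}}=\frac{\mathcal S_r(2x)}{\mathcal S_r(x)^{2^{r-1}}}.$$
   Context: For an integer $r\ge2$ let $P_r(y)=(1-y)\exp\left(y+\frac{y^2}{2}+\cdots+\frac{y^r}{r}\right)$. The multiple cosine function of Kurokawa–Koyama of order $r\ge2$ is $\mathcal C_r(x)=\prod_{n\ge1,\ n\text{ odd}}\left\{P_r\left(\frac{x}{n/2}\right)P_r\left(-\frac{x}{n/2}\right)^{(-1)^{r-1}}\right\}^{(n/2)^{r-1}}$, interpreted as $\mathcal C_r(x)=\exp\Big(\sum_{n\ge1,\,n\text{ odd}}(n/2)^{r-1}\big[\operatorname{Log}P_r(2x/n)+(-1)^{r-1}\operatorname{Log}P_r(-2x/n)\big]\Big)$, where $\operatorname{Log}P_r(y):=\operatorname{Log}(1-y)+y+\frac{y^2}{2}+\cdots+\frac{y^r}{r}$ with $\operatorname{Log}$ the principal branch, for $x\in D=\mathbb C\setminus\big((-\infty,-\tfrac12]\cup[\tfrac12,\infty)\big)$; $\mathcal C_1(x)=2\cos(\pi x)$. Kurokawa's multiple sine function is $\mathcal S_1(x)=2\sin(\pi x)$ and, for $r\ge2$, the meromorphic function $\mathcal S_r(x)=\exp\left(\frac{x^{r-1}}{r-1}\right)\prod_{n=1}^\infty\left\{P_r\left(\frac xn\right)P_r\left(-\frac xn\right)^{(-1)^{r-1}}\right\}^{n^{r-1}}$. *)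

From Stdlib Require Import Reals ClassicalEpsilon.
From Coquelicot Require Import Coquelicot.
Open Scope R_scope.

Notation CC := Complex.C.

(* Limit of a complex sequence (classical choice; 0 if no limit exists). *)
Definition climC (u : nat -> CC) : CC :=
  epsilon (inhabits (RtoC 0)) (fun l => filterlim u eventually (locally l)).

(* Complex exponential, principal argument in (-pi, pi], principal Log. *)
Definition Cexp (z : CC) : CC :=
  (exp (fst z) * cos (snd z), exp (fst z) * sin (snd z)).
Definition Carg (z : CC) : R :=
  if Rle_dec 0 (snd z) then acos (fst z / Cmod z) else - acos (fst z / Cmod z).
Definition CLog (z : CC) : CC := (ln (Cmod z), Carg z).

Definition Ccos (z : CC) : CC :=
  Cdiv (Cplus (Cexp (Cmult Ci z)) (Cexp (Copp (Cmult Ci z)))) (RtoC 2).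
Definition Csin (z : CC) : CC :=
  Cdiv (Cminus (Cexp (Cmult Ci z)) (Cexp (Copp (Cmult Ci z)))) (Cmult (RtoC 2) Ci).

Fixpoint Csum1 (f : nat -> CC) (n : nat) : CC :=
  match n with O => RtoC 0 | S m => Cplus (Csum1 f m) (f (S m)) end.
Fixpoint Cprod1 (f : nat -> CC) (n : nat) : CC :=
  match n with O => RtoC 1 | S m => Cmult (Cprod1 f m) (f (S m)) end.

Definition Tr (r : nat) (y : CC) : CC :=
  Csum1 (fun k => Cdiv (Cpow y k) (RtoC (INR k))) r.

Definition Pr (r : nat) (y : CC) : CC :=
  Cmult (Cminus (RtoC 1) y) (Cexp (Tr r y)).
Definition LogPr (r : nat) (y : CC) : CC :=
  Cplus (CLog (Cminus (RtoC 1) y)) (Tr r y).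

Definition inD (x : CC) : Prop := ~ (snd x = 0 /\ 1/2 <= Rabs (fst x)).

(* (-1)^(r-1) as a complex number *)
Definition sgn_r (r : nat) : CC := if Nat.odd r then RtoC 1 else RtoC (-1).

(* n-th factor of the Kurokawa product:
   {P_r(x/n) P_r(-x/n)^((-1)^(r-1))}^(n^(r-1)) *)
Definition Sfactor (r : nat) (x : CC) (n : nat) : CC :=
  Cpow (Cmult (Pr r (Cdiv x (RtoC (INR n))))
              (if Nat.odd r then Pr r (Cdiv (Copp x) (RtoC (INR n)))
               else Cinv (Pr r (Cdiv (Copp x) (RtoC (INR n))))))
       (Nat.pow n (r - 1)).

Definition mSin (r : nat) (x : CC) : CC :=
  match r with
  | O => RtoC 0 (* unused *)
  | 1%nat => Cmult (RtoC 2) (Csin (Cmult (RtoC PI) x))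
  | _ => Cmult (Cexp (Cdiv (Cpow x (r - 1)) (RtoC (INR (r - 1)))))
               (climC (fun N => Cprod1 (Sfactor r x) N))
  end.

(* m-th term (n = 2m+1 odd) of the series defining Log C_r(x) *)
Definition Cterm (r : nat) (x : CC) (m : nat) : CC :=
  let n := INR (2 * m + 1) in
  Cmult (RtoC ((n / 2) ^ (r - 1)))
        (Cplus (LogPr r (Cdiv (Cmult (RtoC 2) x) (RtoC n)))
               (Cmult (sgn_r r) (LogPr r (Cdiv (Copp (Cmult (RtoC 2) x)) (RtoC n))))).

Definition mCos (r : nat) (x : CC) : CC :=
  match r with
  | O => RtoC 0 (* unused *)
  | 1%nat => Cmult (RtoC 2) (Ccos (Cmult (RtoC PI) x))
  | _ => Cexp (climC (fun N => Csum1 (fun k => Cterm r x (k - 1)) N))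
  end.

(* For r = 1 this is the double-angle formula sin(2 pi x) = 2 sin(pi x) cos(pi x),
   an identity between complex exponentials.

   For r >= 2 let  a_n(x) = n^(r-1) (Log P_r(x/n) + (-1)^(r-1) Log P_r(-x/n)),
   the logarithm of the n-th factor of the product defining S_r.  The estimate
   |Log P_r(y)| <= 4 |y|^(r+1) for |y| <= 1/2, obtained from the mean value
   theorem along the segment t |-> t y, gives a_n(x) = O(n^-2); hence the series
   A(x) = sum_n a_n(x) converges and S_r(x) = exp(x^(r-1)/(r-1) + A(x)) on D.
   Splitting A(2x) into even and odd indices, a_(2m)(2x) = 2^(r-1) a_m(x) and
   a_(2m+1)(2x) = 2^(r-1) c_m(x), where c_m(x) is the m-th term of the series
   for Log C_r(x).  Thus Log C_r(x) = 2^(1-r) A(2x) - A(x), and exponentiating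
   gives the corollary. *)

From Stdlib Require Import Reals Lra Lia ClassicalEpsilon.
From Coquelicot Require Import Coquelicot.

(** * The complex exponential and the principal logarithm *)

Lemma Cexp_add (a b : C) : Cexp (a + b)%C = (Cexp a * Cexp b)%C.
Proof.
  destruct a as [a1 a2], b as [b1 b2]; unfold Cexp, Cmult; simpl.
  rewrite exp_plus, cos_plus, sin_plus. f_equal; ring.
Qed.

Lemma Cexp_0 : Cexp (RtoC 0) = RtoC 1.
Proof.
  unfold Cexp; simpl. rewrite exp_0, cos_0, sin_0.
  apply injective_projections; simpl; ring.
Qed.

(* exp(a + ib) = 0 would force cos b = sin b = 0. *)
Lemma Cexp_neq0 (z : C) : Cexp z <> RtoC 0.
Proof.
  destruct z as [a b]; unfold Cexp; simpl; intro E.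
  injection E as Ecos Esin.
  assert (Ha := exp_pos a).
  assert (cos b = 0) by (apply Rmult_eq_reg_l with (exp a); lra).
  assert (sin b = 0) by (apply Rmult_eq_reg_l with (exp a); lra).
  assert (Hs := sin2_cos2 b). unfold Rsqr in Hs. nra.
Qed.

Lemma Cinv_Cexp (z : C) : Cinv (Cexp z) = Cexp (- z)%C.
Proof.
  assert (Hinv : (Cexp (- z) * Cexp z = 1)%C).
  { rewrite <- Cexp_add. replace (- z + z)%C with (RtoC 0) by ring. apply Cexp_0. }
  assert (Hz := Cexp_neq0 z).
  transitivity ((Cexp (- z) * Cexp z) * / Cexp z)%C.
  - rewrite Hinv. ring.
  - field. exact Hz.
Qed.

Lemma Cpow_Cexp (n : nat) (z : C) : Cpow (Cexp z) n = Cexp (RtoC (INR n) * z)%C.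
Proof.
  induction n as [|n IH]; simpl Cpow.
  - simpl INR. replace (RtoC 0 * z)%C with (RtoC 0) by ring. now rewrite Cexp_0.
  - rewrite IH, <- Cexp_add. f_equal. rewrite S_INR, RtoC_plus. ring.
Qed.

Lemma sqrt_one_sub_sq_ratio (a b : R) :
  (a, b) <> RtoC 0 ->
  sqrt (1 - (a / Cmod (a, b))²) = Rabs b / Cmod (a, b).
Proof.
  intro Hw.
  assert (Hm : 0 < Cmod (a, b)) by (apply Cmod_gt_0; exact Hw).
  assert (Hm2 : Cmod (a, b) * Cmod (a, b) = a ^ 2 + b ^ 2)
    by (unfold Cmod; simpl; apply sqrt_sqrt; nra).
  assert (Hq : 0 < a ^ 2 + b ^ 2) by nra.
  set (m := Cmod (a, b)) in *.
  replace (1 - (a / m)²) with ((Rabs b / m)²).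
  - apply sqrt_Rsqr. apply Rdiv_le_0_compat; [apply Rabs_pos | lra].
  - assert (Hbb : Rabs b * Rabs b = b * b).
    { rewrite <- Rabs_mult. apply Rabs_right. apply Rle_ge, Rle_0_sqr. }
    unfold Rsqr, Rdiv.
    replace (Rabs b * / m * (Rabs b * / m)) with (Rabs b * Rabs b / (m * m)) by (field; lra).
    replace (a * / m * (a * / m)) with (a * a / (m * m)) by (field; lra).
    rewrite Hbb, Hm2. field. lra.
Qed.

Lemma Cexp_CLog (w : C) : w <> RtoC 0 -> Cexp (CLog w) = w.
Proof.
  destruct w as [a b]; intro Hw.
  assert (Hm : 0 < Cmod (a, b)) by (apply Cmod_gt_0; exact Hw).
  assert (Hs := sqrt_one_sub_sq_ratio a b Hw).
  assert (Hcos : -1 <= a / Cmod (a, b) <= 1).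
  { apply Rabs_le_between. unfold Rdiv. rewrite Rabs_mult, Rabs_inv, (Rabs_right (Cmod _)) by lra.
    apply Rmult_le_reg_r with (Cmod (a, b)); [exact Hm|].
    rewrite Rmult_assoc, Rinv_l, Rmult_1_l, Rmult_1_r by lra. apply (re_le_Cmod (a, b)). }
  unfold Cexp, CLog, Carg; cbn [fst snd]. rewrite exp_ln by exact Hm.
  destruct (Rle_dec 0 b).
  - rewrite cos_acos, sin_acos, Hs, Rabs_right by (auto; lra). f_equal; field; lra.
  - rewrite cos_neg, sin_neg, cos_acos, sin_acos, Hs, Rabs_left by (auto; lra).
    f_equal; field; lra.
Qed.

Lemma Carg_right_half (u v : R) : 0 < u -> Carg (u, v) = atan (v / u).
Proof.
  intro Hu.
  assert (Hw : (u, v) <> RtoC 0) by (intro E; injection E; lra).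
  assert (Hm : 0 < Cmod (u, v)) by (apply Cmod_gt_0; exact Hw).
  assert (Hs := sqrt_one_sub_sq_ratio u v Hw).
  unfold Carg; cbn [fst snd].
  rewrite acos_atan, Hs by (apply Rdiv_lt_0_compat; auto).
  replace (Rabs v / Cmod (u, v) / (u / Cmod (u, v))) with (Rabs v / u) by (field; lra).
  destruct (Rle_dec 0 v).
  - rewrite Rabs_right by lra. reflexivity.
  - rewrite Rabs_left by lra. rewrite <- atan_opp. f_equal. field. lra.
Qed.

Lemma Pr_Cexp (r : nat) (y : C) : (RtoC 1 - y)%C <> RtoC 0 -> Pr r y = Cexp (LogPr r y).
Proof. intro H. unfold Pr, LogPr. rewrite Cexp_add, Cexp_CLog; auto. Qed.

Fixpoint Rsum1 (f : nat -> R) (n : nat) : R :=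
  match n with O => 0 | S m => Rsum1 f m + f (S m) end.

Lemma fst_Csum1 (f : nat -> C) (n : nat) : fst (Csum1 f n) = Rsum1 (fun k => fst (f k)) n.
Proof. induction n as [|n IH]; simpl; [reflexivity | now rewrite IH]. Qed.

Lemma snd_Csum1 (f : nat -> C) (n : nat) : snd (Csum1 f n) = Rsum1 (fun k => snd (f k)) n.
Proof. induction n as [|n IH]; simpl; [reflexivity | now rewrite IH]. Qed.

Lemma Rsum1_ext (f g : nat -> R) (n : nat) :
  (forall k, (1 <= k)%nat -> f k = g k) -> Rsum1 f n = Rsum1 g n.
Proof. intro H; induction n; simpl; auto. rewrite IHn, H; auto; lia. Qed.

Lemma Csum1_ext (f g : nat -> C) (n : nat) :
  (forall k, (1 <= k)%nat -> f k = g k) -> Csum1 f n = Csum1 g n.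
Proof. intro H; induction n; simpl; auto. rewrite IHn, H; auto; lia. Qed.

Lemma Rsum1_poly_0 (c : nat -> R) (n : nat) : Rsum1 (fun k => c k * 0 ^ k) n = 0.
Proof. induction n as [|n IH]; simpl; [reflexivity | rewrite IH; ring]. Qed.

Lemma is_derive_Rsum1_poly (c : nat -> R) (n : nat) (t : R) :
  is_derive (fun t => Rsum1 (fun k => c k * t ^ k) n) t
            (Rsum1 (fun k => c k * (INR k * 1 * t ^ Nat.pred k)) n).
Proof.
  induction n as [|n IH]; cbn [Rsum1].
  - auto_derive; auto.
  - apply (is_derive_plus (fun t => Rsum1 (fun k => c k * t ^ k) n)); [exact IH|].
    auto_derive; auto.
    change (match n with 0%nat => 1 | S _ => INR n + 1 end) with (INR (S n)).
    simpl Nat.pred. ring.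
Qed.

Lemma fst_scal (s : R) (w : C) : fst (RtoC s * w)%C = s * fst w.
Proof. destruct w; simpl; ring. Qed.
Lemma snd_scal (s : R) (w : C) : snd (RtoC s * w)%C = s * snd w.
Proof. destruct w; simpl; ring. Qed.
Lemma fst_plus (u v : C) : fst (u + v)%C = fst u + fst v.
Proof. reflexivity. Qed.
Lemma snd_plus (u v : C) : snd (u + v)%C = snd u + snd v.
Proof. reflexivity. Qed.
Lemma fst_divR (w : C) (d : R) : d <> 0 -> fst (w / RtoC d)%C = fst w / d.
Proof. intro; destruct w; unfold Cdiv, Cinv, Cmult; simpl. field. auto. Qed.
Lemma snd_divR (w : C) (d : R) : d <> 0 -> snd (w / RtoC d)%C = snd w / d.
Proof. intro; destruct w; unfold Cdiv, Cinv, Cmult; simpl. field. auto. Qed.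

Lemma RtoC_neq0 (d : R) : d <> 0 -> RtoC d <> RtoC 0.
Proof. intros H E. apply H. exact (RtoC_inj _ _ E). Qed.

Lemma RtoC_m1 : RtoC (-1) = (- (1))%C.
Proof. apply injective_projections; simpl; ring. Qed.

(* Along the ray t y, the truncated logarithm T_r is a polynomial in t. *)
Lemma Tr_scale (r : nat) (t : R) (y : C) :
  Tr r (RtoC t * y)%C = Csum1 (fun k => (RtoC (t ^ k) * (Cpow y k / RtoC (INR k)))%C) r.
Proof.
  unfold Tr. apply Csum1_ext. intros k _.
  rewrite Cpow_mult_l, RtoC_pow. unfold Cdiv. ring.
Qed.

Lemma Csum1_geometric (r : nat) (t : R) (y : C) :
  (Csum1 (fun k => RtoC (t ^ (k - 1)) * Cpow y k) r * (1 - RtoC t * y) =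
   y * (1 - Cpow (RtoC t * y) r))%C.
Proof.
  induction r as [|r IH].
  - simpl. ring.
  - simpl Csum1. rewrite Cmult_plus_distr_r, IH.
    simpl Cpow. rewrite Cpow_mult_l, RtoC_pow. simpl (S r - 1)%nat. rewrite Nat.sub_0_r.
    ring.
Qed.

(** * The estimate |Log P_r(y)| <= 4 |y|^(r+1) for |y| <= 1/2 *)

Lemma mvt_bound (phi dphi : R -> R) (M : R) :
  (forall t, 0 <= t <= 1 -> is_derive phi t (dphi t)) ->
  (forall t, 0 <= t <= 1 -> Rabs (dphi t) <= M) -> Rabs (phi 1 - phi 0) <= M.
Proof.
  intros Hd Hb.
  destruct (MVT_gen phi 0 1 dphi) as [c [Hc ->]].
  - intros t Ht. rewrite Rmin_left, Rmax_right in Ht by lra. apply Hd. lra.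
  - intros t Ht. rewrite Rmin_left, Rmax_right in Ht by lra.
    apply continuity_pt_filterlim, (ex_derive_continuous phi).
    exists (dphi t). apply Hd. lra.
  - rewrite Rmin_left, Rmax_right in Hc by lra.
    rewrite Rminus_0_r, Rmult_1_r. apply Hb; lra.
Qed.

(* We apply mvt_bound to the real and imaginary parts of
   t |-> Log P_r(t y) = Log(1 - t y) + T_r(t y), written out as
   phi1 t = ln |1 - t y| + sum c1_k t^k   and
   phi2 t = atan(-t b / (1 - t a)) + sum c2_k t^k   for y = (a, b).
   Both have as derivative a coordinate of
   W t = -y / (1 - t y) + sum_{k=1}^{r} t^(k-1) y^k = - y (t y)^r / (1 - t y). *)
Section LogPrBound.
Variable r : nat.
Variables a b : R.
Let y : C := (a, b).
Let c1 (k : nat) : R := fst (Cpow y k / RtoC (INR k))%C.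
Let c2 (k : nat) : R := snd (Cpow y k / RtoC (INR k))%C.
Let q (t : R) : R := (1 - t * a) ^ 2 + (t * b) ^ 2.
Let phi1 (t : R) : R := ln (sqrt (q t)) + Rsum1 (fun k => c1 k * t ^ k) r.
Let phi2 (t : R) : R := atan (- (t * b) / (1 - t * a)) + Rsum1 (fun k => c2 k * t ^ k) r.
Let W (t : R) : C := (- y / (1 - RtoC t * y) + Csum1 (fun k => RtoC (t ^ (k - 1)) * Cpow y k) r)%C.

Hypothesis Hy : Cmod y <= 1/2.

Let re_one_sub_ty (t : R) : 0 <= t <= 1 -> 1/2 <= 1 - t * a.
Proof.
  intro Ht. assert (Ha : Rabs a <= 1/2) by (eapply Rle_trans; [apply (re_le_Cmod y) | exact Hy]).
  apply Rabs_le_between in Ha. nra.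
Qed.

Let q_pos (t : R) : 0 <= t <= 1 -> 0 < q t.
Proof. intro Ht. assert (H := re_one_sub_ty t Ht). unfold q. nra. Qed.

Let W_fst (t : R) : 0 <= t <= 1 ->
  fst (W t) = (t * (a * a + b * b) - a) / q t + Rsum1 (fun k => c1 k * (INR k * 1 * t ^ Nat.pred k)) r.
Proof.
  intro Ht. assert (Hq := q_pos t Ht). unfold W. rewrite fst_plus, fst_Csum1. f_equal.
  - unfold y, q in *; unfold Cdiv, Cinv, Cmult; simpl. field. nra.
  - apply Rsum1_ext. intros k Hk. unfold c1.
    assert (INR k <> 0) by (apply not_0_INR; lia).
    rewrite fst_scal, fst_divR by assumption.
    replace (Nat.pred k) with (k - 1)%nat by lia. field. assumption.
Qed.

Let W_snd (t : R) : 0 <= t <= 1 ->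
  snd (W t) = - b / q t + Rsum1 (fun k => c2 k * (INR k * 1 * t ^ Nat.pred k)) r.
Proof.
  intro Ht. assert (Hq := q_pos t Ht). unfold W. rewrite snd_plus, snd_Csum1. f_equal.
  - unfold y, q in *; unfold Cdiv, Cinv, Cmult; simpl. field. nra.
  - apply Rsum1_ext. intros k Hk. unfold c2.
    assert (INR k <> 0) by (apply not_0_INR; lia).
    rewrite snd_scal, snd_divR by assumption.
    replace (Nat.pred k) with (k - 1)%nat by lia. field. assumption.
Qed.

Let phi1_deriv (t : R) : 0 <= t <= 1 -> is_derive phi1 t (fst (W t)).
Proof.
  intro Ht. rewrite W_fst by exact Ht. assert (Hq := q_pos t Ht).
  apply (is_derive_plus (fun t => ln (sqrt (q t)))); [|apply is_derive_Rsum1_poly].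
  unfold q in *. auto_derive.
  - repeat split; try apply sqrt_lt_R0; nra.
  - match goal with |- context [sqrt ?Q] =>
      assert (HS : sqrt Q * sqrt Q = Q) by (apply sqrt_sqrt; nra);
      assert (HP : 0 < sqrt Q) by (apply sqrt_lt_R0; nra);
      assert (HQ : Q = (1 - t * a) ^ 2 + (t * b) ^ 2) by ring;
      set (s := sqrt Q) in * end.
    transitivity ((- a * (1 - t * a) + b * (t * b)) / (s * s)).
    + field. lra.
    + rewrite HS, HQ. field. lra.
Qed.

Let phi2_deriv (t : R) : 0 <= t <= 1 -> is_derive phi2 t (snd (W t)).
Proof.
  intro Ht. rewrite W_snd by exact Ht.
  assert (Hq := q_pos t Ht). assert (Hre := re_one_sub_ty t Ht).
  apply (is_derive_plus (fun t => atan (- (t * b) / (1 - t * a)))); [|apply is_derive_Rsum1_poly].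
  set (g := fun t => - (t * b) / (1 - t * a)).
  assert (Hg : is_derive g t (- b / (1 - t * a) ^ 2)) by (unfold g; auto_derive; [lra | field; lra]).
  assert (Hat : is_derive atan (g t) (/ (1 + g t ^ 2)))
    by (apply is_derive_Reals, derivable_pt_lim_atan).
  replace (- b / q t) with (scal (- b / (1 - t * a) ^ 2) (/ (1 + g t ^ 2))).
  - exact (is_derive_comp atan g t _ _ Hat Hg).
  - unfold scal; simpl; unfold mult; simpl. unfold g, q in *. field. split; lra.
Qed.

Let W_bound (t : R) : 0 <= t <= 1 -> Cmod (W t) <= 2 * Cmod y ^ S r.
Proof.
  intro Ht.
  set (d := (1 - RtoC t * y)%C).
  assert (Hy0 := Cmod_ge_0 y).
  assert (Hd : 1/2 <= Cmod d).
  { assert (H := Cmod_triangle d (RtoC t * y)%C).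
    replace (d + RtoC t * y)%C with (RtoC 1) in H by (unfold d; ring).
    rewrite Cmod_1, Cmod_mult, Cmod_R, Rabs_right in H by lra. nra. }
  assert (Hd0 : d <> RtoC 0) by (intro E; rewrite E, Cmod_0 in Hd; lra).
  assert (HW : (W t * d = - y * Cpow (RtoC t * y) r)%C).
  { unfold W. rewrite Cmult_plus_distr_r. fold d. rewrite Csum1_geometric. field. exact Hd0. }
  assert (HM : Cmod (W t) * Cmod d = Cmod y * (t * Cmod y) ^ r).
  { rewrite <- Cmod_mult, HW, Cmod_mult, Cmod_opp, Cmod_pow, Cmod_mult, Cmod_R, Rabs_right by lra.
    reflexivity. }
  assert (Hp : (t * Cmod y) ^ r <= Cmod y ^ r) by (apply pow_incr; split; nra).
  assert (HW0 := Cmod_ge_0 (W t)).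
  assert (0 <= Cmod y ^ r) by (apply pow_le; exact Hy0).
  simpl. nra.
Qed.

Let LogPr_fst : fst (LogPr r y) = phi1 1 - phi1 0.
Proof.
  assert (H0 : phi1 0 = 0).
  { unfold phi1, q. replace ((1 - 0 * a) ^ 2 + (0 * b) ^ 2) with 1 by ring.
    rewrite sqrt_1, ln_1, Rsum1_poly_0. ring. }
  rewrite H0, Rminus_0_r. unfold LogPr, phi1. rewrite fst_plus. f_equal.
  - unfold CLog, Cmod, q, y. simpl. f_equal. f_equal. ring.
  - replace (Tr r y) with (Tr r (RtoC 1 * y)%C) by (f_equal; ring).
    rewrite Tr_scale, fst_Csum1. apply Rsum1_ext. intros k _.
    rewrite fst_scal. unfold c1. ring.
Qed.

Let LogPr_snd : snd (LogPr r y) = phi2 1 - phi2 0.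
Proof.
  assert (H0 : phi2 0 = 0).
  { unfold phi2. replace (- (0 * b) / (1 - 0 * a)) with 0 by (field; lra).
    rewrite atan_0, Rsum1_poly_0. ring. }
  rewrite H0, Rminus_0_r. unfold LogPr, phi2. rewrite snd_plus. f_equal.
  - assert (Hre := re_one_sub_ty 1 ltac:(lra)).
    unfold CLog. simpl snd.
    replace (1 - y)%C with ((1 - a)%R, (- b)%R) by (apply injective_projections; unfold y; simpl; ring).
    rewrite Carg_right_half by lra. f_equal. field. lra.
  - replace (Tr r y) with (Tr r (RtoC 1 * y)%C) by (f_equal; ring).
    rewrite Tr_scale, snd_Csum1. apply Rsum1_ext. intros k _.
    rewrite snd_scal. unfold c2. ring.
Qed.

Lemma LogPr_bound_pair : Cmod (LogPr r y) <= 4 * Cmod y ^ S r.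
Proof.
  assert (B1 : Rabs (fst (LogPr r y)) <= 2 * Cmod y ^ S r).
  { rewrite LogPr_fst. apply (mvt_bound phi1 (fun t => fst (W t))); [exact phi1_deriv|].
    intros t Ht. eapply Rle_trans; [apply re_le_Cmod | exact (W_bound t Ht)]. }
  assert (B2 : Rabs (snd (LogPr r y)) <= 2 * Cmod y ^ S r).
  { rewrite LogPr_snd. apply (mvt_bound phi2 (fun t => snd (W t))); [exact phi2_deriv|].
    intros t Ht. eapply Rle_trans; [|exact (W_bound t Ht)].
    eapply Rle_trans; [apply Rmax_r | apply Rmax_Cmod]. }
  assert (Hm : Rmax (Rabs (fst (LogPr r y))) (Rabs (snd (LogPr r y))) <= 2 * Cmod y ^ S r)
    by (apply Rmax_lub; assumption).
  assert (H0 : 0 <= Rmax (Rabs (fst (LogPr r y))) (Rabs (snd (LogPr r y))))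
    by (eapply Rle_trans; [apply Rabs_pos | apply Rmax_l]).
  assert (Hs : sqrt 2 <= 2).
  { rewrite <- (sqrt_square 2) at 2 by lra. apply sqrt_le_1_alt. lra. }
  assert (Hs0 := sqrt_pos 2).
  eapply Rle_trans; [apply Cmod_2Rmax | nra].
Qed.
End LogPrBound.

Lemma LogPr_bound (r : nat) (y : C) : Cmod y <= 1/2 -> Cmod (LogPr r y) <= 4 * Cmod y ^ S r.
Proof. destruct y as [a b]. exact (LogPr_bound_pair r a b). Qed.

(** * The series A(x) = sum_n a_n(x) *)

Definition logFactor (r : nat) (x : C) (n : nat) : C :=
  (RtoC (INR (Nat.pow n (r - 1))) *
   (LogPr r (x / RtoC (INR n)) + sgn_r r * LogPr r (Copp x / RtoC (INR n))))%C.

Lemma Cmod_sgn_r (r : nat) : Cmod (sgn_r r) = 1.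
Proof.
  unfold sgn_r. destruct (Nat.odd r); rewrite Cmod_R; [apply Rabs_R1|].
  rewrite Rabs_left by lra. ring.
Qed.

Lemma logFactor_bound (r : nat) (x : C) (n : nat) :
  (1 <= r)%nat -> 0 < INR n -> 2 * Cmod x <= INR n ->
  Cmod (logFactor r x n) <= 8 * Cmod x ^ S r / INR n ^ 2.
Proof.
  intros Hr Hn Hx.
  assert (Hdiv : forall z, Cmod z = Cmod x -> Cmod (z / RtoC (INR n))%C = Cmod x / INR n).
  { intros z Hz. rewrite Cmod_div, Cmod_R, Rabs_right, Hz by (try apply RtoC_neq0; lra).
    reflexivity. }
  assert (Hsmall : Cmod x / INR n <= 1/2).
  { apply Rmult_le_reg_r with (INR n); [exact Hn|].
    unfold Rdiv; rewrite Rmult_assoc, Rinv_l by lra. lra. }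
  assert (B1 := LogPr_bound r (x / RtoC (INR n))%C).
  assert (B2 := LogPr_bound r (Copp x / RtoC (INR n))%C).
  rewrite Hdiv in B1, B2 by (reflexivity || apply Cmod_opp).
  specialize (B1 Hsmall). specialize (B2 Hsmall).
  assert (HS : Cmod (LogPr r (x / RtoC (INR n)) + sgn_r r * LogPr r (Copp x / RtoC (INR n)))%C
               <= 8 * (Cmod x / INR n) ^ S r).
  { eapply Rle_trans; [apply Cmod_triangle|]. rewrite Cmod_mult, Cmod_sgn_r. lra. }
  assert (Hp : 0 <= INR n ^ (r - 1)) by (apply pow_le; lra).
  unfold logFactor. rewrite Cmod_mult, Cmod_R, Rabs_right, pow_INR by (apply Rle_ge, pos_INR).
  eapply Rle_trans; [apply Rmult_le_compat_l; [exact Hp | exact HS]|].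
  right. replace (S r) with ((r - 1) + 2)%nat by lia.
  unfold Rdiv. rewrite Rpow_mult_distr, pow_add, pow_add, pow_inv, pow_inv.
  field. split; [lra | apply pow_nonzero; lra].
Qed.

Lemma telescope_series : is_series (fun k => / INR (S k) - / INR (S (S k))) 1.
Proof.
  assert (Hs : forall N, sum_n (fun k => / INR (S k) - / INR (S (S k))) N = 1 - / INR (S (S N))).
  { induction N as [|N IH].
    - rewrite sum_O. simpl. field.
    - rewrite sum_Sn, IH. unfold plus; simpl. ring. }
  assert (Hl : is_lim_seq (fun N => 1 - / INR (S (S N))) (1 - 0)).
  { apply is_lim_seq_minus'; [apply is_lim_seq_const|].
    assert (H := is_lim_seq_inv _ _ is_lim_seq_INR). simpl in H.
    specialize (H ltac:(discriminate)).
    apply (is_lim_seq_incr_n _ 2) in H.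
    eapply is_lim_seq_ext; [|exact H]. intro n. cbv beta.
    now replace (n + 2)%nat with (S (S n)) by lia. }
  rewrite Rminus_0_r in Hl.
  unfold is_series. eapply filterlim_ext; [intro N; symmetry; apply Hs | exact Hl].
Qed.

Lemma inv_sq_le_telescope (s : R) : 1 <= s -> / s ^ 2 <= 2 * (/ s - / (s + 1)).
Proof.
  intro Hs.
  assert (E : 2 * (/ s - / (s + 1)) - / s ^ 2 = (s - 1) / (s ^ 2 * (s + 1))) by (field; lra).
  assert (0 <= (s - 1) / (s ^ 2 * (s + 1))).
  { apply Rdiv_le_0_compat; [lra|]. apply Rmult_lt_0_compat; [apply pow_lt|]; lra. }
  lra.
Qed.

Lemma Csum1_sum_n (f : nat -> C) (N : nat) : Csum1 f (S N) = sum_n (fun k => f (S k)) N.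
Proof.
  induction N as [|N IH].
  - rewrite sum_O. simpl. apply injective_projections; simpl; ring.
  - rewrite sum_Sn, <- IH. reflexivity.
Qed.

Lemma filterlim_succ (f : nat -> C) (L : C) :
  filterlim (fun N => f (S N)) eventually (locally L) ->
  filterlim f eventually (locally L).
Proof.
  intros H P HP. destruct (H P HP) as [N HN]. exists (S N).
  intros [|n] Hn; [lia | apply HN; lia].
Qed.

Lemma logFactor_tail_bound (r : nat) (x : C) (N0 k : nat) :
  (1 <= r)%nat -> 2 * Cmod x < INR N0 ->
  Cmod (logFactor r x (S (N0 + k))) <= 16 * Cmod x ^ S r * (/ INR (S k) - / INR (S (S k))).
Proof.
  intros Hr HN0.
  assert (HM : 0 <= Cmod x ^ S r) by (apply pow_le, Cmod_ge_0).
  assert (Hk : 1 <= INR (S k)) by (rewrite S_INR; assert (H := pos_INR k); lra).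
  assert (Hkn : INR (S k) <= INR (S (N0 + k))) by (apply le_INR; lia).
  assert (HN0n : INR N0 <= INR (S (N0 + k))) by (apply le_INR; lia).
  eapply Rle_trans; [apply logFactor_bound; [exact Hr | lra | lra]|].
  assert (H1 : / INR (S (N0 + k)) ^ 2 <= / INR (S k) ^ 2).
  { apply Rinv_le_contravar; [apply pow_lt; lra | apply pow_incr; lra]. }
  assert (H2 := inv_sq_le_telescope (INR (S k)) Hk).
  rewrite <- (S_INR (S k)) in H2.
  unfold Rdiv. apply Rle_trans with (8 * Cmod x ^ S r * / INR (S k) ^ 2).
  - apply Rmult_le_compat_l; lra.
  - nra.
Qed.

Lemma logFactor_summable (r : nat) (x : C) : (1 <= r)%nat ->
  exists L, filterlim (Csum1 (logFactor r x)) eventually (locally L).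
Proof.
  intro Hr.
  destruct (INR_unbounded (2 * Cmod x)) as [N0 HN0].
  set (u := fun k => logFactor r x (S k)).
  assert (Htail : ex_series (fun k => u (N0 + k)%nat)).
  { apply (@ex_series_le C_AbsRing C_CompleteNormedModule _
             (fun k => 16 * Cmod x ^ S r * (/ INR (S k) - / INR (S (S k))))).
    - intro k. exact (logFactor_tail_bound r x N0 k Hr HN0).
    - eexists. exact (is_series_scal_l _ _ _ telescope_series). }
  apply (ex_series_incr_n u N0) in Htail.
  destruct Htail as [l Hl]. exists l. apply filterlim_succ.
  eapply filterlim_ext; [intro N; symmetry; apply Csum1_sum_n | exact Hl].
Qed.

Lemma climC_spec (u : nat -> C) (l : C) : filterlim u eventually (locally l) -> climC u = l.
Proof.
  intro H. unfold climC.
  assert (Hs := epsilon_spec (inhabits (RtoC 0)) (fun l => filterlim u eventually (locally l))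
                             (ex_intro _ l H)).
  exact (@filterlim_locally_unique nat C_AbsRing C_NormedModule eventually _ u _ _ Hs H).
Qed.

Lemma lim_fst (s : nat -> C) (L : C) : filterlim s eventually (locally L) ->
  is_lim_seq (fun n => fst (s n)) (fst L).
Proof.
  intros H P [eps HP]. apply (H (fun z => P (fst z))). exists eps.
  intros z [Hz _]. apply HP, Hz.
Qed.

Lemma lim_snd (s : nat -> C) (L : C) : filterlim s eventually (locally L) ->
  is_lim_seq (fun n => snd (s n)) (snd L).
Proof.
  intros H P [eps HP]. apply (H (fun z => P (snd z))). exists eps.
  intros z [_ Hz]. apply HP, Hz.
Qed.

Lemma lim_pair (p q : nat -> R) (a b : R) :
  is_lim_seq p a -> is_lim_seq q b ->
  filterlim (fun n => ((p n, q n) : C)) eventually (locally ((a, b) : C)).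
Proof.
  intros Hp Hq P [eps HP].
  destruct (Hp (ball a eps) (locally_ball a eps)) as [N1 H1].
  destruct (Hq (ball b eps) (locally_ball b eps)) as [N2 H2].
  exists (max N1 N2). intros n Hn. apply HP. split; simpl; [apply H1 | apply H2]; lia.
Qed.

Lemma lim_Cexp (s : nat -> C) (L : C) : filterlim s eventually (locally L) ->
  filterlim (fun n => Cexp (s n)) eventually (locally (Cexp L)).
Proof.
  intro H. assert (H1 := lim_fst s L H). assert (H2 := lim_snd s L H).
  assert (E : is_lim_seq (fun n => exp (fst (s n))) (exp (fst L)))
    by (apply is_lim_seq_continuous; [apply derivable_continuous_pt, derivable_exp | exact H1]).
  assert (Co : is_lim_seq (fun n => cos (snd (s n))) (cos (snd L)))
    by (apply is_lim_seq_continuous; [apply continuity_cos | exact H2]).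
  assert (Si : is_lim_seq (fun n => sin (snd (s n))) (sin (snd L)))
    by (apply is_lim_seq_continuous; [apply continuity_sin | exact H2]).
  unfold Cexp. apply lim_pair; apply is_lim_seq_mult'; assumption.
Qed.

Lemma lim_lin (u v : nat -> C) (l m c : C) :
  filterlim u eventually (locally l) -> filterlim v eventually (locally m) ->
  filterlim (fun n => (u n + c * v n)%C) eventually (locally (l + c * m)%C).
Proof.
  intros Hu Hv.
  apply (filterlim_comp_2 (G := locally l) (H := locally (c * m)%C) u (fun n => (c * v n)%C) Cplus);
    [exact Hu | | exact (@filterlim_plus C_AbsRing C_NormedModule l (c * m)%C)].
  apply (filterlim_comp _ _ _ v (fun z => (c * z)%C) eventually (locally m)); [exact Hv|].
  exact (@filterlim_scal_r C_AbsRing C_NormedModule c m).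
Qed.

Lemma lim_double_index (u : nat -> C) (l : C) : filterlim u eventually (locally l) ->
  filterlim (fun N => u (2 * N)%nat) eventually (locally l).
Proof.
  intros H P HP. destruct (H P HP) as [N HN]. exists N. intros n Hn. apply HN. lia.
Qed.

(** * Exponential forms of S_r and C_r *)

(* For x in D and a real c with |c| <= 2, the point c x / n (n >= 1) is never 1:
   otherwise x = n / c would be real with |x| >= 1/2. *)
Lemma one_sub_scaled_neq0 (x : C) (n : nat) (c : R) :
  inD x -> (1 <= n)%nat -> Rabs c <= 2 -> (RtoC 1 - RtoC c * x / RtoC (INR n))%C <> RtoC 0.
Proof.
  intros HD Hn Hc E.
  assert (Hn1 : 1 <= INR n) by (apply (le_INR 1); lia).
  assert (Ez : (RtoC c * x)%C = RtoC (INR n)).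
  { transitivity ((RtoC c * x / RtoC (INR n)) * RtoC (INR n))%C.
    - field. apply RtoC_neq0. lra.
    - replace (RtoC c * x / RtoC (INR n))%C with (RtoC 1) by (rewrite <- (Cplus_0_l (_ / _)%C), <- E; ring).
      ring. }
  assert (H1 : c * fst x = INR n) by (rewrite <- fst_scal, Ez; reflexivity).
  assert (H2 : c * snd x = 0) by (rewrite <- snd_scal, Ez; reflexivity).
  assert (Hc0 : c <> 0) by (intro; subst; lra).
  apply HD. split.
  - apply Rmult_eq_reg_l with c; [lra | exact Hc0].
  - assert (Habs : INR n = Rabs c * Rabs (fst x)) by (rewrite <- Rabs_mult, H1, Rabs_right; lra).
    assert (H0 := Rabs_pos (fst x)). nra.
Qed.

Lemma Sfactor_Cexp (r : nat) (x : C) (n : nat) :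
  (RtoC 1 - x / RtoC (INR n))%C <> RtoC 0 ->
  (RtoC 1 - Copp x / RtoC (INR n))%C <> RtoC 0 ->
  Sfactor r x n = Cexp (logFactor r x n).
Proof.
  intros H1 H2. unfold Sfactor, logFactor, sgn_r. rewrite !Pr_Cexp by assumption.
  destruct (Nat.odd r).
  - rewrite <- Cexp_add, Cpow_Cexp. f_equal. ring.
  - rewrite Cinv_Cexp, <- Cexp_add, Cpow_Cexp, RtoC_m1. f_equal. ring.
Qed.

Lemma Cprod1_Cexp (r : nat) (x : C) (N : nat) :
  (forall n, (1 <= n)%nat -> Sfactor r x n = Cexp (logFactor r x n)) ->
  Cprod1 (Sfactor r x) N = Cexp (Csum1 (logFactor r x) N).
Proof.
  intro H. induction N as [|N IH]; simpl.
  - symmetry. apply Cexp_0.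
  - rewrite IH, H, Cexp_add by lia. reflexivity.
Qed.

Lemma mSin_Cexp (r : nat) (x L : C) : (2 <= r)%nat ->
  (forall n, (1 <= n)%nat -> Sfactor r x n = Cexp (logFactor r x n)) ->
  filterlim (Csum1 (logFactor r x)) eventually (locally L) ->
  mSin r x = (Cexp (Cpow x (r - 1) / RtoC (INR (r - 1))) * Cexp L)%C.
Proof.
  intros Hr HS HL. destruct r as [|[|r']]; [lia | lia |].
  unfold mSin; cbv beta iota. f_equal. apply climC_spec.
  eapply filterlim_ext; [intro N; symmetry; apply Cprod1_Cexp; exact HS|].
  apply lim_Cexp, HL.
Qed.

(* On D the product for S_r(c x), |c| <= 2, has no vanishing P_r-factor, so
   S_r(c x) = exp((c x)^(r-1)/(r-1)) exp(A(c x)); we use c = 1 and c = 2. *)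
Lemma mSin_Cexp_on_D (r : nat) (x : C) (c : R) (L : C) :
  (2 <= r)%nat -> inD x -> Rabs c <= 2 ->
  filterlim (Csum1 (logFactor r (RtoC c * x)%C)) eventually (locally L) ->
  mSin r (RtoC c * x)%C = (Cexp (Cpow (RtoC c * x)%C (r - 1) / RtoC (INR (r - 1))) * Cexp L)%C.
Proof.
  intros Hr HD Hc HL. apply mSin_Cexp; [exact Hr | | exact HL].
  intros n Hn. apply Sfactor_Cexp.
  - exact (one_sub_scaled_neq0 x n c HD Hn Hc).
  - replace (Copp (RtoC c * x)) with (RtoC (- c) * x)%C
      by (rewrite RtoC_opp; ring).
    apply one_sub_scaled_neq0; [exact HD | exact Hn | rewrite Rabs_Ropp; exact Hc].
Qed.

Lemma mCos_Cexp (r : nat) (x L : C) : (2 <= r)%nat ->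
  filterlim (Csum1 (fun k => Cterm r x (k - 1))) eventually (locally L) ->
  mCos r x = Cexp L.
Proof.
  intros Hr HL. destruct r as [|[|r']]; [lia | lia |].
  unfold mCos; cbv beta iota. f_equal. apply climC_spec, HL.
Qed.

(** * Splitting A(2x) into even and odd indices *)

Lemma logFactor_odd (r : nat) (x : C) (m : nat) :
  logFactor r (RtoC 2 * x)%C (2 * m + 1) = (RtoC (2 ^ (r - 1)) * Cterm r x m)%C.
Proof.
  unfold Cterm, logFactor. cbv zeta. rewrite Cmult_assoc, <- RtoC_mult.
  f_equal. f_equal. rewrite pow_INR, <- Rpow_mult_distr. f_equal. field.
Qed.

Lemma logFactor_even (r : nat) (x : C) (m : nat) : (1 <= m)%nat ->
  logFactor r (RtoC 2 * x)%C (2 * m) = (RtoC (2 ^ (r - 1)) * logFactor r x m)%C.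
Proof.
  intro Hm. assert (Hm0 : INR m <> 0) by (apply not_0_INR; lia).
  unfold logFactor. rewrite Nat.pow_mul_l, !mult_INR, pow_INR.
  replace (INR 2) with 2 by (simpl; ring).
  assert (E1 : ((RtoC 2 * x) / RtoC (2 * INR m) = x / RtoC (INR m))%C).
  { rewrite RtoC_mult. field. repeat split; apply RtoC_neq0; lra. }
  assert (E2 : (Copp (RtoC 2 * x) / RtoC (2 * INR m) = Copp x / RtoC (INR m))%C).
  { rewrite RtoC_mult. field. repeat split; apply RtoC_neq0; lra. }
  rewrite E1, E2, RtoC_mult. ring.
Qed.

Lemma Csum1_logFactor_double (r : nat) (x : C) (N : nat) :
  Csum1 (logFactor r (RtoC 2 * x)%C) (2 * N) =
  (RtoC (2 ^ (r - 1)) * (Csum1 (fun k => Cterm r x (k - 1)) N + Csum1 (logFactor r x) N))%C.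
Proof.
  induction N as [|N IH].
  - simpl. ring.
  - replace (2 * S N)%nat with (S (S (2 * N))) by lia. cbn [Csum1].
    rewrite IH. replace (S (2 * N)) with (2 * N + 1)%nat by lia.
    rewrite logFactor_odd. replace (S (2 * N + 1)) with (2 * S N)%nat by lia.
    rewrite logFactor_even by lia. replace (S N - 1)%nat with N by lia. ring.
Qed.

Lemma Cterm_series_limit (r : nat) (x L1 L2 : C) :
  filterlim (Csum1 (logFactor r x)) eventually (locally L1) ->
  filterlim (Csum1 (logFactor r (RtoC 2 * x)%C)) eventually (locally L2) ->
  filterlim (Csum1 (fun k => Cterm r x (k - 1))) eventually
            (locally (RtoC 0 + / RtoC (2 ^ (r - 1)) * L2 + RtoC (-1) * L1)%C).
Proof.
  intros H1 H2.
  assert (HK : RtoC (2 ^ (r - 1)) <> RtoC 0) by (apply RtoC_neq0, pow_nonzero; lra).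
  eapply filterlim_ext;
    [|apply lim_lin; [apply lim_lin; [apply filterlim_const | apply (lim_double_index _ _ H2)] | exact H1]].
  intro N. cbv beta. rewrite Csum1_logFactor_double, RtoC_m1. field. exact HK.
Qed.

Lemma corollary_r1 (x : C) : mSin 1 x <> RtoC 0 ->
  Cpow (mCos 1 x) (2 ^ (1 - 1)) = Cdiv (mSin 1 (Cmult (RtoC 2) x)) (Cpow (mSin 1 x) (2 ^ (1 - 1))).
Proof.
  intro H. unfold mSin, mCos in *. simpl Cpow. unfold Csin, Ccos in *.
  set (w := (Ci * (RtoC PI * x))%C) in *.
  replace (Ci * (RtoC PI * (RtoC 2 * x)))%C with (w + w)%C by (unfold w; ring).
  replace (- (w + w))%C with (- w + - w)%C by ring.
  rewrite !Cexp_add.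
  assert (HEF : (Cexp w - Cexp (- w))%C <> RtoC 0) by (intro E; apply H; rewrite E; unfold Cdiv; ring).
  assert (Hi : Ci <> RtoC 0) by (intro E; injection E; lra).
  field. repeat split; assumption.
Qed.

Theorem corollary3p2 (r : nat) (x : Complex.C) :
  ((r = 1%nat /\ mSin 1 x <> RtoC 0) \/ ((2 <= r)%nat /\ inD x)) ->
  Cpow (mCos r x) (2 ^ (r - 1)) =
  Cdiv (mSin r (Cmult (RtoC 2) x)) (Cpow (mSin r x) (2 ^ (r - 1))).
Proof.
  intros [[-> H] | [Hr HD]]; [exact (corollary_r1 x H)|].
  destruct (logFactor_summable r x ltac:(lia)) as [L1 H1].
  destruct (logFactor_summable r (RtoC 2 * x)%C ltac:(lia)) as [L2 H2].
  assert (ES1 := mSin_Cexp_on_D r x 1 L1 Hr HD ltac:(rewrite Rabs_R1; lra)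
                                 ltac:(rewrite Cmult_1_l; exact H1)).
  assert (ES2 := mSin_Cexp_on_D r x 2 L2 Hr HD ltac:(rewrite Rabs_right; lra) H2).
  rewrite Cmult_1_l in ES1.
  rewrite ES1, ES2, (mCos_Cexp r x _ Hr (Cterm_series_limit r x L1 L2 H1 H2)).
  rewrite <- !Cexp_add, !Cpow_Cexp. unfold Cdiv. rewrite Cinv_Cexp, <- Cexp_add.
  f_equal. rewrite Cpow_mult_l, <- RtoC_pow, pow_INR, RtoC_m1.
  replace (INR 2) with 2 by (simpl; ring).
  assert (HK : RtoC (2 ^ (r - 1)) <> RtoC 0) by (apply RtoC_neq0, pow_nonzero; lra).
  assert (Hd : RtoC (INR (r - 1)) <> RtoC 0) by (apply RtoC_neq0, not_0_INR; lia).
  field. split; assumption.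
Qed.
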